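(* Let $\{\mathcal G,(\Gamma_0,\Gamma_1),(\widetilde\Gamma_0,\widetilde\Gamma_1)\}$ be a triple for the adjoint pair $\{S,\widetilde S\}$ satisfying (G) and (M). Then: (i) if $\operatorname{ran}\Gamma_0$ is dense in $\mathcal G$ and $\operatorname{ran}\widetilde\Gamma_0=\mathcal G$, then $\operatorname{ran}(\Gamma_0,\Gamma_1)^\top$ is dense in $\mathcal G\times\mathcal G$; (ii) if $\operatorname{ran}\widetilde\Gamma_0$ is dense in $\mathcal G$ and $\operatorname{ran}\Gamma_0=\mathcal G$, then $\operatorname{ran}(\widetilde\Gamma_0,\widetilde\Gamma_1)^\top$ is dense in $\mathcal G\times\mathcal G$. In particular, if $\operatorname{ran}\Gamma_0=\operatorname{ran}\widetilde\Gamma_0=\mathcal G$, then condition (DD) holds and the triple is a quasi boundary triple for $\{S,\widetilde S\}$.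
   Context: Let $\mathfrak H$ be a separable Hilbert space. An adjoint pair $\{S,\widetilde S\}$ consists of densely defined closed operators $S,\widetilde S$ in $\mathfrak H$ with $(Sf,g)=(f,\widetilde Sg)$ for all $f\in\operatorname{dom}S$, $g\in\operatorname{dom}\widetilde S$. Fix operators $T\subset S^*$ and $\widetilde T\subset\widetilde S^*$ which are cores, i.e. $\overline T=S^*$ and $\overline{\widetilde T}=\widetilde S^*$ (equivalently $T^*=S$, $\widetilde T^*=\widetilde S$). A triple $\{\mathcal G,(\Gamma_0,\Gamma_1),(\widetilde\Gamma_0,\widetilde\Gamma_1)\}$ for $\{S,\widetilde S\}$ consists of a Hilbert space $\mathcal G$ and linear maps $\Gamma_0,\Gamma_1:\operatorname{dom}T\to\mathcal G$, $\widetilde\Gamma_0,\widetilde\Gamma_1:\operatorname{dom}\widetilde T\to\mathcal G$. Put $A_0:=T\upharpoonright\ker\Gamma_0$ and $\widetilde A_0:=\widetilde T\upharpoonright\ker\widetilde\Gamma_0$. Conditions: (G) $(Tf,g)_{\mathfrak H}-(f,\widetilde Tg)_{\mathfrak H}=(\Gamma_1f,\widetilde\Gamma_0g)_{\mathcal G}-(\Gamma_0f,\widetilde\Gamma_1g)_{\mathcal G}$ for all $f\in\operatorname{dom}T$, $g\in\operatorname{dom}\widetilde T$; (D) $\operatorname{ran}\Gamma_0$ and $\operatorname{ran}\widetilde\Gamma_0$ are dense in $\mathcal G$; (DD) $\operatorname{ran}(\Gamma_0,\Gamma_1)^\top$ and $\operatorname{ran}(\widetilde\Gamma_0,\widetilde\Gamma_1)^\top$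 are dense in $\mathcal G\times\mathcal G$; (M) $A_0^*=\widetilde A_0$ and $\widetilde A_0^*=A_0$. A quasi boundary triple is a triple satisfying (G), (DD) and (M). *)

From HB Require Import structures.
From mathcomp Require Import all_boot all_order all_algebra.
From mathcomp Require Import classical_sets reals.
From mathcomp Require Import complex.
Set Implicit Arguments. Unset Strict Implicit. Unset Printing Implicit Defensive.
Import Order.TTheory GRing.Theory Num.Theory.
Local Open Scope ring_scope.
Local Open Scope classical_set_scope.

Section Hilbert.
Variables (R : realType) (V : lmodType R[i]) (ip : V -> V -> R[i]).

Definition nsq (x : V) : R := complex.Re (ip x x).

Definition is_inner_product : Prop :=
  [/\ (forall (a : R[i]) x y z, ip (a *: x + y) z = a * ip x z + ip y z),
      (forall x y, ip y x = Num.conj (ip x y)),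
      (forall x, 0 <= ip x x) &
      (forall x, ip x x = 0 -> x = 0)].

Definition is_complete : Prop :=
  forall u : nat -> V,
    (forall eps : R, 0 < eps -> exists N, forall m n, (N <= m)%N -> (N <= n)%N ->
        nsq (u m - u n) < eps) ->
    exists x, forall eps : R, 0 < eps -> exists N, forall n, (N <= n)%N ->
        nsq (u n - x) < eps.

Definition is_hilbert : Prop := is_inner_product /\ is_complete.

Definition dense_in (A : set V) : Prop :=
  forall x (eps : R), 0 < eps -> exists a, A a /\ nsq (x - a) < eps.

Definition dense_in2 (A : set (V * V)) : Prop :=
  forall x y (eps : R), 0 < eps ->
    exists p, A p /\ nsq (x - p.1) + nsq (y - p.2) < eps.

Definition separable : Prop := exists u : nat -> V, dense_in (range u).

(* ---------- operators, represented by their graphs ---------- *)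
Definition is_operator (A : set (V * V)) : Prop :=
  [/\ A (0, 0),
      (forall (a : R[i]) p q, A p -> A q -> A (a *: p.1 + q.1, a *: p.2 + q.2)) &
      (forall f h k, A (f, h) -> A (f, k) -> h = k)].

Definition dom (A : set (V * V)) : set V := [set f | exists h, A (f, h)].

Definition adjoint (A : set (V * V)) : set (V * V) :=
  [set q | forall p, A p -> ip p.2 q.1 = ip p.1 q.2].

Definition gclosure (A : set (V * V)) : set (V * V) :=
  [set q | forall eps : R, 0 < eps ->
     exists p, A p /\ nsq (q.1 - p.1) + nsq (q.2 - p.2) < eps].

Definition densely_defined (A : set (V * V)) : Prop := dense_in (dom A).
Definition closed_op (A : set (V * V)) : Prop := gclosure A `<=` A.

Definition adjoint_pair (S St : set (V * V)) : Prop :=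
  [/\ is_operator S /\ is_operator St, densely_defined S /\ densely_defined St,
      closed_op S /\ closed_op St &
      (forall p q, S p -> St q -> ip p.2 q.1 = ip p.1 q.2)].

End Hilbert.

Section Triples.
Variables (R : realType) (H : lmodType R[i]) (ipH : H -> H -> R[i])
          (G : lmodType R[i]) (ipG : G -> G -> R[i]).

Definition linear_on (D : set H) (L : H -> G) : Prop :=
  forall (a : R[i]) f g, D f -> D g -> L (a *: f + g) = a *: L f + L g.

Definition restr_ker (T : set (H * H)) (Gam0 : H -> G) : set (H * H) :=
  [set p | T p /\ Gam0 p.1 = 0].

Definition ran (T : set (H * H)) (L : H -> G) : set G := L @` dom T.

Definition ran2 (T : set (H * H)) (L0 L1 : H -> G) : set (G * G) :=
  [set (L0 f, L1 f) | f in dom T].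

Definition cond_G (T Tt : set (H * H)) (Gam0 Gam1 Gamt0 Gamt1 : H -> G) : Prop :=
  forall p q, T p -> Tt q ->
    ipH p.2 q.1 - ipH p.1 q.2 = ipG (Gam1 p.1) (Gamt0 q.1) - ipG (Gam0 p.1) (Gamt1 q.1).

Definition cond_D (T Tt : set (H * H)) (Gam0 Gamt0 : H -> G) : Prop :=
  dense_in ipG (ran T Gam0) /\ dense_in ipG (ran Tt Gamt0).

Definition cond_DD (T Tt : set (H * H)) (Gam0 Gam1 Gamt0 Gamt1 : H -> G) : Prop :=
  dense_in2 ipG (ran2 T Gam0 Gam1) /\ dense_in2 ipG (ran2 Tt Gamt0 Gamt1).

Definition cond_M (T Tt : set (H * H)) (Gam0 Gamt0 : H -> G) : Prop :=
  adjoint ipH (restr_ker T Gam0) = restr_ker Tt Gamt0 /\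
  adjoint ipH (restr_ker Tt Gamt0) = restr_ker T Gam0.

(* standing setting: {S,St} adjoint pair, T, Tt cores of S^*, St^*, and
   Gamma maps linear on dom T, dom Tt *)
Definition triple_setting (S St T Tt : set (H * H))
    (Gam0 Gam1 Gamt0 Gamt1 : H -> G) : Prop :=
  [/\ adjoint_pair ipH S St,
      is_operator T /\ is_operator Tt,
      T `<=` adjoint ipH S /\ Tt `<=` adjoint ipH St,
      gclosure ipH T = adjoint ipH S /\ gclosure ipH Tt = adjoint ipH St &
      [/\ linear_on (dom T) Gam0, linear_on (dom T) Gam1,
          linear_on (dom Tt) Gamt0 & linear_on (dom Tt) Gamt1]].

Definition quasi_boundary_triple (T Tt : set (H * H))
    (Gam0 Gam1 Gamt0 Gamt1 : H -> G) : Prop :=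
  [/\ cond_G T Tt Gam0 Gam1 Gamt0 Gamt1,
      cond_DD T Tt Gam0 Gam1 Gamt0 Gamt1 &
      cond_M T Tt Gam0 Gamt0].

End Triples.

(** If (x, y) is orthogonal to ran (Γ0, Γ1), write y = Γ~0 g by surjectivity
    of Γ~0. Identity (G), tested against f in ker Γ0, says that (g, T~ g)
    lies in A0^* = A~0, hence y = Γ~0 g = 0; then x is orthogonal to the
    dense set ran Γ0, so x = 0. In the Hilbert space G x G a subspace with
    trivial orthogonal complement is dense (projection theorem), which gives
    (i). Conjugating (G) shows that the swapped triple again satisfies (G)
    and (M), so (ii) is (i) for the swapped triple. *)
From HB Require Import structures.
From mathcomp Require Import all_boot all_order all_algebra.
From mathcomp Require Import boolp classical_sets reals.
From mathcomp Require Import complex.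
From mathcomp Require Import ring lra.
Import Order.TTheory GRing.Theory Num.Theory.
Local Open Scope ring_scope.
Local Open Scope classical_set_scope.
Local Open Scope complex_scope.
Set Implicit Arguments. Unset Strict Implicit.

Section ComplexParts.
Variable R : realType.
Implicit Types (a b : R[i]) (c : R).

Lemma ReD a b : complex.Re (a + b) = complex.Re a + complex.Re b.
Proof. by case: a; case: b. Qed.

Lemma ReN a : complex.Re (- a) = - complex.Re a.
Proof. by case: a. Qed.

Lemma Re_realM c b : complex.Re (c%:C * b) = c * complex.Re b.
Proof. by case: b => x y /=; rewrite mul0r subr0. Qed.

Lemma Re_conj b : complex.Re (Num.conj b) = complex.Re b.
Proof. by case: b. Qed.

Lemma Re_iM b : complex.Re ('i * b) = - complex.Im b.
Proof. by case: b => x y /=; ring. Qed.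

Lemma complex_eq0 b : complex.Re b = 0 -> complex.Im b = 0 -> b = 0.
Proof. by case: b => x y /= -> ->. Qed.

End ComplexParts.

Section InnerProduct.
Variables (R : realType) (V : lmodType R[i]) (ip : V -> V -> R[i]).
Hypothesis ipP : is_inner_product ip.

Definition re_ip x y := complex.Re (ip x y).

Lemma ipC x y : ip y x = Num.conj (ip x y).
Proof. by case: ipP. Qed.

Lemma ipDl x y z : ip (x + y) z = ip x z + ip y z.
Proof. by case: ipP => L _ _ _; rewrite -[x]scale1r L mul1r scale1r. Qed.

Lemma ip0l z : ip 0 z = 0.
Proof. by apply: (addrI (ip 0 z)); rewrite -ipDl !addr0. Qed.

Lemma ip0r z : ip z 0 = 0.
Proof. by rewrite ipC ip0l rmorph0. Qed.

Lemma ipZl a x z : ip (a *: x) z = a * ip x z.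
Proof. by case: ipP => L _ _ _; rewrite -[a *: x]addr0 L ip0l addr0. Qed.

Lemma ipNl x z : ip (- x) z = - ip x z.
Proof. by rewrite -scaleN1r ipZl mulN1r. Qed.

Lemma re_ipC x y : re_ip x y = re_ip y x.
Proof. by rewrite /re_ip ipC Re_conj. Qed.

Lemma re_ipDl x y z : re_ip (x + y) z = re_ip x z + re_ip y z.
Proof. by rewrite /re_ip ipDl ReD. Qed.

Lemma re_ipNl x z : re_ip (- x) z = - re_ip x z.
Proof. by rewrite /re_ip ipNl ReN. Qed.

Lemma re_ipZl (c : R) x z : re_ip (c%:C *: x) z = c * re_ip x z.
Proof. by rewrite /re_ip ipZl Re_realM. Qed.

Lemma re_ipNr x z : re_ip z (- x) = - re_ip z x.
Proof. by rewrite !(re_ipC z) re_ipNl. Qed.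

Lemma re_ipZr (c : R) x z : re_ip x (c%:C *: z) = c * re_ip x z.
Proof. by rewrite re_ipC re_ipZl re_ipC. Qed.

Lemma re_ip0r z : re_ip z 0 = 0.
Proof. by rewrite /re_ip ip0r. Qed.

Lemma ip_eq0_from_re w z :
  re_ip z w = 0 -> re_ip z ('i *: w) = 0 -> ip w z = 0.
Proof.
move=> hre him; apply: complex_eq0; first by rewrite -/(re_ip w z) re_ipC.
by apply/eqP; rewrite -oppr_eq0 -Re_iM -ipZl -/(re_ip _ _) re_ipC him.
Qed.

Lemma nsqE x : nsq ip x = re_ip x x.
Proof. by []. Qed.

Lemma nsq_ge0 x : 0 <= nsq ip x.
Proof. by case: ipP => _ _ P _; have := P x; rewrite lecE => /andP[]. Qed.

Lemma nsq_eq0 x : nsq ip x = 0 -> x = 0.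
Proof.
case: ipP => _ _ P D E; apply: D; apply: complex_eq0 => //.
by have := P x; rewrite lecE => /andP[/eqP -> _].
Qed.

Lemma nsq_gt0 x : x != 0 -> 0 < nsq ip x.
Proof. by move=> x0; rewrite lt_def nsq_ge0 andbT; apply: contra x0 => /eqP/nsq_eq0->. Qed.

Lemma nsq0 : nsq ip 0 = 0.
Proof. by rewrite /nsq ip0l. Qed.

Lemma nsqD x y : nsq ip (x + y) = nsq ip x + nsq ip y + 2 * re_ip x y.
Proof.
rewrite !nsqE re_ipDl ![re_ip _ (x + y)]re_ipC !re_ipDl.
by rewrite [re_ip y x]re_ipC; lra.
Qed.

Lemma nsqN x : nsq ip (- x) = nsq ip x.
Proof. by rewrite !nsqE re_ipNl re_ipNr opprK. Qed.

Lemma nsqB x y : nsq ip (x - y) = nsq ip x + nsq ip y - 2 * re_ip x y.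
Proof. by rewrite nsqD nsqN re_ipNr; lra. Qed.

Lemma nsqDZ p w (c : R) :
  nsq ip (p + c%:C *: w) = nsq ip p + 2 * c * re_ip p w + c ^+ 2 * nsq ip w.
Proof. by rewrite nsqD re_ipZr [nsq ip (_ *: _)]nsqE re_ipZl re_ipZr -nsqE; lra. Qed.

Lemma parallelogram x y :
  nsq ip (x + y) + nsq ip (x - y) = 2 * nsq ip x + 2 * nsq ip y.
Proof. by rewrite nsqD nsqB; lra. Qed.

(* Evaluate at the maximiser [t = B / C]. *)
Lemma quad_bound (B C K : R) :
  0 < C -> (forall t, 2 * t * B - t ^+ 2 * C <= K) -> B ^+ 2 <= K * C.
Proof.
move=> C0 hK; have := hK (B / C).
have -> : 2 * (B / C) * B - (B / C) ^+ 2 * C = B ^+ 2 / C.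
  by field; rewrite gt_eqF.
by rewrite ler_pdivrMr.
Qed.

Lemma re_ip_sqr_le x w : re_ip x w ^+ 2 <= nsq ip x * nsq ip w.
Proof.
have [->|w0] := eqVneq w 0; first by rewrite re_ip0r expr0n mulr_ge0 ?nsq_ge0.
apply: quad_bound; first exact: nsq_gt0.
by move=> t; have := nsq_ge0 (x + (- t)%:C *: w); rewrite nsqDZ; lra.
Qed.

End InnerProduct.

Lemma sqr_small_eq0 (R : realDomainType) (r : R) :
  (forall eps, 0 < eps -> r ^+ 2 < eps) -> r = 0.
Proof.
move=> small; apply/eqP; apply: contraT => r0.
by have := small (r ^+ 2); rewrite ltxx exprn_even_gt0 //= r0; apply.
Qed.

Lemma invn_small (R : realType) (eps : R) : 0 < eps ->
  exists N, forall n, (N <= n)%N -> n.+1%:R^-1 < eps.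
Proof.
move=> eps0; exists (Num.Def.archi_bound eps^-1) => n Nn.
have bound : eps^-1 < (Num.Def.archi_bound eps^-1)%:R.
  by apply: archi_boundP; rewrite invr_ge0 ltW.
rewrite -[eps]invrK ltf_pV2 ?posrE ?invr_gt0 ?ltr0n //.
by apply: (lt_le_trans bound); rewrite ler_nat leqW.
Qed.

Section Projection.
Variables (R : realType) (V : lmodType R[i]) (ip : V -> V -> R[i]).
Hypotheses (ipP : is_inner_product ip) (ip_complete : is_complete ip).
Variable W : set V.
Hypotheses (W0 : W 0) (WL : forall a u v, W u -> W v -> W (a *: u + v)).

Let WZ a u : W u -> W (a *: u).
Proof. by move=> Wu; rewrite -[_ *: u]addr0; exact: WL. Qed.

Let WD u v : W u -> W v -> W (u + v).
Proof. by move=> Wu Wv; rewrite -[u]scale1r; exact: WL. Qed.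

Definition nsq_cvg (u : nat -> V) z := forall eps : R, 0 < eps ->
  exists N, forall n, (N <= n)%N -> nsq ip (u n - z) < eps.

Section Minimizer.
Variable x : V.

Let dists := [set r : R | exists a, W a /\ r = nsq ip (x - a)].
Let dist := inf dists.

Let has_inf_dists : has_inf dists.
Proof.
split; first by exists (nsq ip (x - 0)), 0.
by exists 0 => _ [a [_ ->]]; exact: nsq_ge0.
Qed.

Let dist_le a : W a -> dist <= nsq ip (x - a).
Proof. by move=> Wa; apply: (ge_inf has_inf_dists.2); exists a. Qed.

(* The midpoint of [a] and [b] lies in [W], so it is no closer to [x] than
   [dist]; the parallelogram law turns this into a bound on [a - b]. *)
Lemma near_minimizers_close a b e1 e2 : W a -> W b ->
  nsq ip (x - a) <= dist + e1 -> nsq ip (x - b) <= dist + e2 ->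
  nsq ip (a - b) <= 2 * e1 + 2 * e2.
Proof.
move=> Wa Wb ha hb; pose c := (2^-1 : R)%:C *: (a + b).
have cc : c + c = a + b.
  rewrite -scalerDl -rmorphD /= (_ : 2^-1 + 2^-1 = 1 :> R) ?rmorph1 ?scale1r //.
  by field.
have mid : (x - c) + (x - c) = (x - b) + (x - a).
  by rewrite addrACA -opprD cc [RHS]addrACA -opprD (addrC b).
have diff : a - b = (x - b) - (x - a).
  by rewrite opprB [RHS]addrC addrA subrK.
have := parallelogram ipP (x - b) (x - a).
rewrite -mid -diff (nsqD ipP) -nsqE.
have := dist_le (WZ (2^-1)%:C (WD Wa Wb)); rewrite -/c; lra.
Qed.

Lemma near_minimizer_orth a e w : W a -> nsq ip (x - a) <= dist + e -> W w ->
  re_ip ip (x - a) w ^+ 2 <= e * nsq ip w.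
Proof.
move=> Wa ha Ww; have [->|w0] := eqVneq w 0.
  by rewrite re_ip0r // expr0n nsq0 // mulr0.
apply: quad_bound; first exact: nsq_gt0.
move=> t; have := dist_le (WL t%:C Ww Wa).
have -> : x - (t%:C *: w + a) = (x - a) + (- t)%:C *: w.
  by rewrite rmorphN scaleNr opprD addrCA addrA (addrC (- _) x) addrAC.
by rewrite (nsqDZ ipP); lra.
Qed.

Definition minimizing (a : nat -> V) :=
  forall n, W (a n) /\ nsq ip (x - a n) <= dist + n.+1%:R^-1.

Lemma minimizing_exists : exists a, minimizing a.
Proof.
suff /choice [a ha] : forall n, exists b,
    W b /\ nsq ip (x - b) <= dist + n.+1%:R^-1 by exists a.
move=> n; have n0 : 0 < n.+1%:R^-1 :> R by rewrite invr_gt0 ltr0n.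
have [_ [b [Wb ->]] lt] := inf_adherent n0 has_inf_dists.
by exists b; split; last exact: ltW.
Qed.

Lemma minimizing_cvg a : minimizing a -> exists z, nsq_cvg a z.
Proof.
move=> ha; apply: ip_complete => e e0.
have [N HN] := invn_small (divr_gt0 e0 (ltr0n R 4)).
exists N => m n Nm Nn.
have := near_minimizers_close (ha m).1 (ha n).1 (ha m).2 (ha n).2.
have := HN m Nm; have := HN n Nn; set u := m.+1%:R^-1; set v := n.+1%:R^-1; lra.
Qed.

Lemma minimizing_limit_orth a z : minimizing a -> nsq_cvg a z ->
  forall w, W w -> re_ip ip (x - z) w = 0.
Proof.
move=> ha az w Ww; apply: sqr_small_eq0 => eps eps0.
have key n : re_ip ip (x - z) w ^+ 2 <=
    2 * nsq ip w * (n.+1%:R^-1 + nsq ip (a n - z)).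
  have r1 := near_minimizer_orth (ha n).1 (ha n).2 Ww.
  have r2 := re_ip_sqr_le ipP (a n - z) w.
  have -> : x - z = (x - a n) + (a n - z) by rewrite addrA subrK.
  rewrite (re_ipDl ipP); move: r1 r2.
  move: (re_ip ip (x - a n) w) (re_ip ip (a n - z) w) (n.+1%:R^-1) => r s u r1 r2.
  have := sqr_ge0 (r - s); nra.
pose C := nsq ip w + 1; have C0 : 0 < C by rewrite ltr_wpDl ?nsq_ge0.
pose del := eps / (4 * C); have del0 : 0 < del by rewrite divr_gt0 ?mulr_gt0.
have [N1 HN1] := invn_small del0; have [N2 HN2] := az _ del0.
pose n := maxn N1 N2; have := key n.
have e_small := HN1 n (leq_maxl _ _); have s_small := HN2 n (leq_maxr _ _).
have e0 : 0 <= n.+1%:R^-1 :> R by rewrite invr_ge0.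
have s0 := nsq_ge0 ipP (a n - z).
move: (n.+1%:R^-1) (nsq ip (a n - z)) e0 s0 e_small s_small.
move=> e s e0 s0 e_small s_small.
have bound : nsq ip w * (e + s) <= C * (e + s).
  by rewrite ler_wpM2r ?addr_ge0 // lerDl.
have bound' : C * (e + s) < C * (2 * del) by rewrite ltr_pM2l //; lra.
have epsE : eps = 4 * C * del by rewrite /del; field; rewrite gt_eqF ?mulr_gt0.
lra.
Qed.

End Minimizer.

Lemma perp_trivial_dense :
  (forall z, (forall w, W w -> ip w z = 0) -> z = 0) -> dense_in ip W.
Proof.
move=> perp x eps eps0.
have [a ha] := minimizing_exists x; have [z az] := minimizing_cvg ha.
have xz : x = z.
  apply/subr0_eq/perp => w Ww; apply: ip_eq0_from_re => //.
    exact: minimizing_limit_orth ha az _ Ww.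
  exact: minimizing_limit_orth ha az _ (WZ _ Ww).
have [N HN] := az _ eps0; exists (a N); split; first exact: (ha N).1.
by rewrite -(nsqN ipP) opprB xz; exact: HN.
Qed.

End Projection.

Section ProductSpace.
Variables (R : realType) (G : lmodType R[i]) (ipG : G -> G -> R[i]).

Definition ip2 (p q : G * G) : R[i] := ipG p.1 q.1 + ipG p.2 q.2.

Lemma nsq2E p : nsq ip2 p = nsq ipG p.1 + nsq ipG p.2.
Proof. exact: ReD. Qed.

Hypothesis ipP : is_inner_product ipG.

Lemma ip2_inner : is_inner_product ip2.
Proof.
case: (ipP) => L C P D; split.
- by move=> a x y z; rewrite /ip2 /= !L; ring.
- by move=> x y; rewrite /ip2 !(C x.1) !(C x.2) rmorphD.
- by move=> x; rewrite addr_ge0.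
- case=> x1 x2; rewrite /ip2 /= => /eqP.
  by rewrite paddr_eq0 // => /andP[/eqP/D -> /eqP/D ->].
Qed.

Lemma ip2_complete : is_complete ipG -> is_complete ip2.
Proof.
move=> hc u cu.
have [l1 h1] : exists l1, nsq_cvg ipG (fun n => (u n).1) l1.
  apply: hc => e e0; have [N HN] := cu e e0; exists N => m n Nm Nn.
  have := HN m n Nm Nn; rewrite nsq2E /=.
  by have := nsq_ge0 ipP ((u m).2 - (u n).2); lra.
have [l2 h2] : exists l2, nsq_cvg ipG (fun n => (u n).2) l2.
  apply: hc => e e0; have [N HN] := cu e e0; exists N => m n Nm Nn.
  have := HN m n Nm Nn; rewrite nsq2E /=.
  by have := nsq_ge0 ipP ((u m).1 - (u n).1); lra.
exists (l1, l2) => e e0; have e2 : 0 < e / 2 by rewrite divr_gt0.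
have [N1 HN1] := h1 _ e2; have [N2 HN2] := h2 _ e2.
exists (maxn N1 N2) => n Nn; rewrite nsq2E /=.
have := HN1 n (leq_trans (leq_maxl _ _) Nn).
have := HN2 n (leq_trans (leq_maxr _ _) Nn); lra.
Qed.

Lemma perp_trivial_dense2 (W : set (G * G)) :
  is_complete ipG -> W 0 -> (forall a u v, W u -> W v -> W (a *: u + v)) ->
  (forall x y, (forall w, W w -> ipG w.1 x + ipG w.2 y = 0) ->
     x = 0 /\ y = 0) ->
  dense_in2 ipG W.
Proof.
move=> hc W0 WL perp x y e e0.
have [|p [Wp]] := perp_trivial_dense ip2_inner (ip2_complete hc) W0 WL _ (x, y) e0.
  by move=> [z1 z2] hz; have [-> ->] := perp z1 z2 hz.
by rewrite nsq2E; exists p.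
Qed.

End ProductSpace.

Lemma dense_setT (R : realType) (G : lmodType R[i]) (ipG : G -> G -> R[i]) :
  is_inner_product ipG -> dense_in ipG setT.
Proof. by move=> ipP x e e0; exists x; rewrite subrr nsq0. Qed.

Lemma perp_dense_eq0 (R : realType) (G : lmodType R[i]) (ipG : G -> G -> R[i])
    (A : set G) x :
  is_inner_product ipG -> dense_in ipG A -> (forall a, A a -> ipG a x = 0) ->
  x = 0.
Proof.
move=> ipP dA perp; apply: (nsq_eq0 ipP); apply/eqP; apply: contraT => x0.
have [a [Aa]] : exists a, A a /\ nsq ipG (x - a) < nsq ipG x.
  by apply: dA; rewrite lt_def x0 nsq_ge0.
rewrite (nsqB ipP) (re_ipC ipP) /re_ip perp //=.
by have := nsq_ge0 ipP a; lra.
Qed.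

Section Triples.
Variables (R : realType) (H : lmodType R[i]) (ipH : H -> H -> R[i])
          (G : lmodType R[i]) (ipG : G -> G -> R[i]).

Lemma linear_on0 (D : set H) (L : H -> G) : D 0 -> linear_on D L -> L 0 = 0.
Proof.
move=> D0 lin; have := lin 1 0 0 D0 D0; rewrite scale1r !addr0 scale1r => E.
by apply: (addrI (L 0)); rewrite addr0 -E.
Qed.

Lemma dom_subspace (T : set (H * H)) : is_operator T ->
  dom T 0 /\ forall a f g, dom T f -> dom T g -> dom T (a *: f + g).
Proof.
case=> T0 TL _; split; first by exists 0.
by move=> a f g [h Tfh] [k Tgk]; exists (a *: h + k); exact: (TL a (f, h) (g, k)).
Qed.

Lemma ran2_subspace (T : set (H * H)) (Gam0 Gam1 : H -> G) : is_operator T ->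
    linear_on (dom T) Gam0 -> linear_on (dom T) Gam1 ->
  ran2 T Gam0 Gam1 0 /\ forall a u v, ran2 T Gam0 Gam1 u ->
    ran2 T Gam0 Gam1 v -> ran2 T Gam0 Gam1 (a *: u + v).
Proof.
move=> opT lin0 lin1; have [D0 DL] := dom_subspace opT; split.
  by exists 0 => //; rewrite (linear_on0 D0 lin0) (linear_on0 D0 lin1).
move=> a _ _ [f df <-] [g dg <-]; exists (a *: f + g); first exact: DL.
by rewrite lin0 // lin1.
Qed.

Lemma cond_G_swap (T Tt : set (H * H)) (Gam0 Gam1 Gamt0 Gamt1 : H -> G) :
  is_inner_product ipH -> is_inner_product ipG ->
  cond_G ipH ipG T Tt Gam0 Gam1 Gamt0 Gamt1 ->
  cond_G ipH ipG Tt T Gamt0 Gamt1 Gam0 Gam1.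
Proof.
move=> hH hG hGc q p Tq Tp.
rewrite (ipC hH p.1 q.2) (ipC hH p.2 q.1).
rewrite (ipC hG (Gam0 p.1)) (ipC hG (Gam1 p.1)).
rewrite -!rmorphB; congr Num.conj.
by apply: oppr_inj; rewrite !opprB hGc.
Qed.

Lemma ran2_dense (T Tt : set (H * H)) (Gam0 Gam1 Gamt0 Gamt1 : H -> G) :
    is_hilbert ipG -> is_operator T ->
    linear_on (dom T) Gam0 -> linear_on (dom T) Gam1 ->
    cond_G ipH ipG T Tt Gam0 Gam1 Gamt0 Gamt1 ->
    adjoint ipH (restr_ker T Gam0) `<=` restr_ker Tt Gamt0 ->
  dense_in ipG (ran T Gam0) -> ran Tt Gamt0 = setT ->
  dense_in2 ipG (ran2 T Gam0 Gam1).
Proof.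
move=> [hGi hGc] opT lin0 lin1 hG A0adj dT rTt.
have [W0 WL] := ran2_subspace opT lin0 lin1.
apply: perp_trivial_dense2 => // x y perp.
have perp_f f h : T (f, h) -> ipG (Gam0 f) x + ipG (Gam1 f) y = 0.
  by move=> Tfh; apply: (perp (_, _)); exists f => //; exists h.
have y0 : y = 0.
  have : ran Tt Gamt0 y by rewrite rTt.
  case=> g [k Tgk] gy; rewrite -gy; suff [] : restr_ker Tt Gamt0 (g, k) by [].
  apply: A0adj => -[f h] [Tfh /= G0] /=; apply/eqP; rewrite -subr_eq0.
  rewrite (hG (f, h) (g, k) Tfh Tgk) /= G0 (ip0l hGi) subr0.
  by have := perp_f f h Tfh; rewrite G0 (ip0l hGi) add0r -gy => ->.
split=> //; apply: (perp_dense_eq0 hGi dT) => _ [f [h Tfh] <-].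
by have := perp_f f h Tfh; rewrite y0 (ip0r hGi) addr0.
Qed.

End Triples.

Close Scope complex_scope.
Unset Implicit Arguments.

Theorem lemma2p3 (R : realType)
  (H : lmodType R[i]) (ipH : H -> H -> R[i])
  (G : lmodType R[i]) (ipG : G -> G -> R[i])
  (hH : is_hilbert ipH) (sepH : separable ipH) (hG : is_hilbert ipG)
  (S St T Tt : set (H * H)) (Gam0 Gam1 Gamt0 Gamt1 : H -> G)
  (hset : triple_setting (G:=G) ipH S St T Tt Gam0 Gam1 Gamt0 Gamt1)
  (hGcond : cond_G ipH ipG T Tt Gam0 Gam1 Gamt0 Gamt1)
  (hM : cond_M ipH T Tt Gam0 Gamt0) :
  [/\ (dense_in ipG (ran T Gam0) -> ran Tt Gamt0 = setT ->
         dense_in2 ipG (ran2 T Gam0 Gam1)),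
      (dense_in ipG (ran Tt Gamt0) -> ran T Gam0 = setT ->
         dense_in2 ipG (ran2 Tt Gamt0 Gamt1)) &
      (ran T Gam0 = setT -> ran Tt Gamt0 = setT ->
         cond_DD ipG T Tt Gam0 Gam1 Gamt0 Gamt1 /\
         quasi_boundary_triple ipH ipG T Tt Gam0 Gam1 Gamt0 Gamt1)].
Proof.
case: hset => _ [opT opTt] _ _ [lin0 lin1 lint0 lint1].
have [[hHi _] [hGi _]] := (hH, hG).
have part_i := ran2_dense hG opT lin0 lin1 hGcond (subsetW hM.1).
have part_ii := ran2_dense hG opTt lint0 lint1 (cond_G_swap hHi hGi hGcond)
  (subsetW hM.2).
split; [exact: part_i | exact: part_ii | move=> rT rTt].
have DD : cond_DD ipG T Tt Gam0 Gam1 Gamt0 Gamt1.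
  by split; [apply: part_i | apply: part_ii]; rewrite ?rT ?rTt //;
    exact: dense_setT hGi.
by split; last split.
Qed.
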